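(* Let $R=\bigoplus_{n\ge0}R_n$ be a standard graded Noetherian ring whose base ring $(R_0,\mathfrak m_0)$ is an Artinian local ring with infinite residue field. Let $M$ be a finitely generated graded $R$-module minimally generated by homogeneous elements of degrees $d_1\ge\cdots\ge d_s$. Then for any finite set $\mathcal P=\{\mathfrak p_1,\dots,\mathfrak p_n\}$ of homogeneous prime ideals of $R$ there exists a homogeneous element $x\in M$ of degree $d_1$ such that for all $1\le i\le n$, $$\mu\big((M/Rx)_{\mathfrak p_i}\big)=\max\{0,\ \mu(M_{\mathfrak p_i})-1\}.$$
   Context: Standard graded means $R=R_0[R_1]$, i.e. $R$ is generated as an $R_0$-algebra by finitely many elements of degree $1$. $\mu(N)$ denotes the minimal number of generators of a module $N$ over the local ring $R_{\mathfrak p}$. *)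

From mathcomp Require Import all_boot all_order all_algebra.
Set Implicit Arguments. Unset Strict Implicit. Unset Printing Implicit Defensive.
Import Order.TTheory GRing.Theory Num.Theory.
Local Open Scope ring_scope.

Section Defs.
Variable R : comNzRingType.

Definition is_ideal (I : R -> Prop) : Prop :=
  [/\ I 0, (forall a b, I a -> I b -> I (a + b)) & (forall r a, I a -> I (r * a))].

Definition is_prime_ideal (P : R -> Prop) : Prop :=
  [/\ is_ideal P, ~ P 1 & (forall a b, P (a * b) -> P a \/ P b)].

Definition in_ideal_span (k : nat) (g : 'I_k -> R) (r : R) : Prop :=
  exists c : 'I_k -> R, r = \sum_i c i * g i.

Definition noetherian : Prop :=
  forall I : R -> Prop, is_ideal I ->
    exists (k : nat) (g : 'I_k -> R), forall r, I r <-> in_ideal_span g r.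

(* Rg n is the degree-n part; R = (+)_{n >= 0} R_n internally *)
Definition graded_ring (Rg : nat -> R -> Prop) : Prop :=
  [/\ (forall n, Rg n 0) /\
      (forall n a b, Rg n a -> Rg n b -> Rg n (a - b)),
      Rg 0%N 1,
      (forall i j a b, Rg i a -> Rg j b -> Rg (i + j)%N (a * b)),
      (forall r, exists (N : nat) (a : nat -> R),
          (forall n, Rg n (a n)) /\ r = \sum_(n < N) a n) &
      (forall (N : nat) (a : nat -> R), (forall n, Rg n (a n)) ->
          \sum_(n < N) a n = 0 -> forall n, (n < N)%N -> a n = 0)].

(* standard graded: R is generated as an R_0-algebra by finitely many
   elements of degree 1 *)
Definition standard_graded (Rg : nat -> R -> Prop) : Prop :=
  exists (k : nat) (y : 'I_k -> R), (forall i, Rg 1%N (y i)) /\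
    forall S : R -> Prop,
      (forall a, Rg 0%N a -> S a) -> (forall i, S (y i)) ->
      (forall a b, S a -> S b -> S (a + b)) ->
      (forall a b, S a -> S b -> S (a * b)) ->
      forall r, S r.

Definition is_ideal0 (Rg : nat -> R -> Prop) (I : R -> Prop) : Prop :=
  [/\ (forall a, I a -> Rg 0%N a), I 0,
      (forall a b, I a -> I b -> I (a + b)) &
      (forall r a, Rg 0%N r -> I a -> I (r * a))].

Definition local0 (Rg : nat -> R -> Prop) (m0 : R -> Prop) : Prop :=
  is_ideal0 Rg m0 /\
  forall a, Rg 0%N a -> (~ m0 a <-> exists b, Rg 0%N b /\ a * b = 1).

Definition artinian0 (Rg : nat -> R -> Prop) : Prop :=
  forall I : nat -> R -> Prop, (forall n, is_ideal0 Rg (I n)) ->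
    (forall n a, I n.+1 a -> I n a) ->
    exists N, forall n, (N <= n)%N -> forall a, I n a <-> I N a.

(* the residue field R_0 / m0 is infinite *)
Definition infinite_residue (Rg : nat -> R -> Prop) (m0 : R -> Prop) : Prop :=
  exists f : nat -> R, (forall n, Rg 0%N (f n)) /\
    forall i j, m0 (f i - f j) -> i = j.

Definition homogeneous_ideal (Rg : nat -> R -> Prop) (P : R -> Prop) : Prop :=
  forall (N : nat) (a : nat -> R), (forall n, Rg n (a n)) ->
    P (\sum_(n < N) a n) -> forall n, (n < N)%N -> P (a n).

Variable M : lmodType R.

(* graded R-module M = (+)_{k in Z} M_k internally *)
Definition graded_module (Rg : nat -> R -> Prop) (Mg : int -> M -> Prop) : Prop :=
  [/\ (forall k, Mg k 0),
      (forall k a b, Mg k a -> Mg k b -> Mg k (a - b)),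
      (forall i j r m, Rg i r -> Mg j m -> Mg (i%:Z + j) (r *: m)),
      (forall m, exists (ks : seq int) (a : int -> M),
          (forall k, Mg k (a k)) /\ m = \sum_(k <- ks) a k) &
      (forall (ks : seq int) (a : int -> M), uniq ks -> (forall k, Mg k (a k)) ->
          \sum_(k <- ks) a k = 0 -> forall k, k \in ks -> a k = 0)].

Definition in_mspan (k : nat) (g : 'I_k -> M) (m : M) : Prop :=
  exists c : 'I_k -> R, m = \sum_i c i *: g i.

Definition minimal_generators (k : nat) (g : 'I_k -> M) : Prop :=
  (forall m, in_mspan g m) /\
  forall i : 'I_k, exists m, ~ exists c : 'I_k -> R,
      c i = 0 /\ m = \sum_j c j *: g j.

Definition in_mspan_seq (gs : seq M) (m : M) : Prop :=
  exists c : seq R, m = \sum_(i < size gs) c`_i *: gs`_i.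

(* The localization (M / <hs>)_p is generated over R_p by k elements.
   Generators may be taken as images of elements of M; then the images of
   g_1..g_k generate (M/<hs>)_p iff every m in M satisfies s*m in
   <g_1..g_k, hs> for some s not in p. *)
Definition loc_quot_generated (p : R -> Prop) (hs : seq M) (k : nat) : Prop :=
  exists g : seq M, size g = k /\
    forall m : M, exists s : R, ~ p s /\ in_mspan_seq (g ++ hs) (s *: m).

Definition mu_loc_quot (p : R -> Prop) (hs : seq M) (k : nat) : Prop :=
  loc_quot_generated p hs k /\
  forall k', loc_quot_generated p hs k' -> (k <= k')%N.

End Defs.

From mathcomp Require Import all_boot all_order all_algebra.
From Stdlib Require Import Classical.
Import Order.TTheory GRing.Theory Num.Theory.
Local Open Scope ring_scope.
Set Implicit Arguments. Unset Strict Implicit. Unset Printing Implicit Defensive.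

(* Fix p = P_i with M_p <> 0.  By Nakayama some element of M lies outside p M_p, and
   one can be found already in the top degree d_1: if some r in R_1 lies outside p,
   multiply the generators by powers of r; otherwise R = R_0 + p, elements of R_0
   outside p are units (the maximal ideal of the Artinian ring R_0 is nilpotent, hence
   inside p), and comparing degree-d_1 components shows that g_1 \notin p M_p, since
   otherwise g_1 would be redundant.  As the residue field is infinite, one x of degree
   d_1 avoids all the proper submodules {m | m/1 \in p_i M_{p_i}} of M_{d_1} at once,
   and an element of M_p outside p M_p can replace a minimal generator of M_p, so
   mu((M/Rx)_p) = mu(M_p) - 1. *)

Section Ideals.
Variable R : comNzRingType.
Implicit Types (Q : R -> Prop) (a b r : R).

Lemma ideal0 Q : is_ideal Q -> Q 0. Proof. by case. Qed.

Lemma idealD Q a b : is_ideal Q -> Q a -> Q b -> Q (a + b).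
Proof. by case=> _ + _; apply. Qed.

Lemma idealMl Q r a : is_ideal Q -> Q a -> Q (r * a).
Proof. by case=> _ _; apply. Qed.

Lemma idealMr Q r a : is_ideal Q -> Q a -> Q (a * r).
Proof. by rewrite mulrC; apply: idealMl. Qed.

Lemma idealT : is_ideal (fun _ : R => True). Proof. by []. Qed.

Lemma prime_ideal_ideal Q : is_prime_ideal Q -> is_ideal Q. Proof. by case. Qed.

Lemma prime_ideal_neq1 Q : is_prime_ideal Q -> ~ Q 1. Proof. by case. Qed.

Lemma prime_idealM_notin Q a b : is_prime_ideal Q -> ~ Q a -> ~ Q b -> ~ Q (a * b).
Proof. by case=> _ _ HQ Ha Hb /HQ []. Qed.

Lemma prime_idealB_notin Q a b : is_prime_ideal Q -> ~ Q a -> Q b -> ~ Q (a - b).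
Proof.
move=> /prime_ideal_ideal HQ Ha Hb Hab; apply: Ha.
by rewrite -(subrK b a); apply: idealD.
Qed.

Lemma prime_ideal_root Q a e : is_prime_ideal Q -> Q (a ^+ e) -> Q a.
Proof.
move=> HQ; elim: e => [|e IH]; first by move/(prime_ideal_neq1 HQ).
by rewrite exprS; case: HQ => _ _ /[apply] -[].
Qed.

End Ideals.

Arguments idealT {R}.

Fixpoint span_with (R : comNzRingType) (M : lmodType R)
    (Q : R -> Prop) (gs : seq M) (m : M) : Prop :=
  if gs is a :: l then exists r m', [/\ Q r, span_with Q l m' & m = r *: a + m']
  else m = 0.

Notation span := (span_with (fun _ => True)).

Section Span.
Variables (R : comNzRingType) (M : lmodType R).
Implicit Types (Q : R -> Prop) (gs : seq M) (m : M).

Lemma in_mspan_seq_span gs m : in_mspan_seq gs m <-> span gs m.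
Proof.
elim: gs m => [|a l IH] m /=.
  by split=> [[c ->]|->]; [rewrite big_ord0|exists [::]; rewrite big_ord0].
split=> [[c ->]|[r [m' [_ /IH [c ->] ->]]]].
  rewrite big_ord_recl /=; exists c`_0, (\sum_(i < size l) (behead c)`_i *: l`_i).
  split=> //; first by apply/IH; exists (behead c).
  by congr (_ + _); apply: eq_bigr => i _; rewrite nth_behead.
by exists (r :: c); rewrite big_ord_recl.
Qed.

Lemma span_with_sub Q Q' gs m :
  (forall r, Q r -> Q' r) -> span_with Q gs m -> span_with Q' gs m.
Proof.
move=> HQ; elim: gs m => [|v l IH] m //=.
by case=> r [m' [Qr /IH Hm' ->]]; exists r, m'; split=> //; apply: HQ.
Qed.

Variable Q : R -> Prop.
Hypothesis HQ : is_ideal Q.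

Lemma span_with0 gs : span_with Q gs 0.
Proof. by elim: gs => [|a l IH] //=; exists 0, 0; rewrite scale0r addr0; split=> //; apply: ideal0. Qed.

Lemma span_withD gs a b : span_with Q gs a -> span_with Q gs b -> span_with Q gs (a + b).
Proof.
elim: gs a b => [|v l IH] a b /=; first by move=> -> ->; rewrite addr0.
case=> r [m [Qr Hm ->]] [r' [m' [Qr' Hm' ->]]].
exists (r + r'), (m + m'); split; [exact: idealD | exact: IH |].
by rewrite scalerDl addrACA.
Qed.

Lemma span_withZ gs c a : span_with Q gs a -> span_with Q gs (c *: a).
Proof.
elim: gs a => [|v l IH] a /=; first by move=> ->; rewrite scaler0.
case=> r [m [Qr Hm ->]]; exists (c * r), (c *: m).
by split; [exact: idealMl | exact: IH | rewrite scalerDr scalerA].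
Qed.

Lemma span_withB gs a b : span_with Q gs a -> span_with Q gs b -> span_with Q gs (a - b).
Proof. by move=> Ha Hb; rewrite -scaleN1r; apply/span_withD/span_withZ. Qed.

Lemma span_with_scale gs p a : Q p -> span gs a -> span_with Q gs (p *: a).
Proof.
move=> Qp; elim: gs a => [|v l IH] a /=; first by move=> ->; rewrite scaler0.
case=> r [m [_ Hm ->]]; exists (p * r), (p *: m).
by split; [exact: idealMr | exact: IH | rewrite scalerDr scalerA].
Qed.

Lemma span_with_cat gs1 gs2 m :
  span_with Q (gs1 ++ gs2) m <->
  exists m1 m2, [/\ span_with Q gs1 m1, span_with Q gs2 m2 & m = m1 + m2].
Proof.
elim: gs1 m => [|a l IH] m /=.
  by split=> [H|[m1 [m2 [-> H ->]]]]; [exists 0, m; rewrite add0r | rewrite add0r].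
split.
  case=> r [m' [Qr /IH [m1 [m2 [H1 H2 ->]]] ->]].
  by exists (r *: a + m1), m2; rewrite addrA; split=> //; exists r, m1.
case=> m1 [m2 [[r [m' [Qr H' ->]]] H2 ->]].
exists r, (m' + m2); rewrite addrA; split=> //.
by apply/IH; exists m', m2.
Qed.

Lemma span_with_catl gs1 gs2 m : span_with Q gs1 m -> span_with Q (gs1 ++ gs2) m.
Proof. by move=> H; apply/span_with_cat; exists m, 0; rewrite addr0; split=> //; apply: span_with0. Qed.

Lemma span_with_catr gs1 gs2 m : span_with Q gs2 m -> span_with Q (gs1 ++ gs2) m.
Proof. by move=> H; apply/span_with_cat; exists 0, m; rewrite add0r; split=> //; apply: span_with0. Qed.

End Span.

Lemma span_mem (R : comNzRingType) (M : lmodType R) (gs : seq M) a : a \in gs -> span gs a.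
Proof.
elim: gs => [|v l IH] //=; rewrite inE => /orP [/eqP ->|/IH Ha].
  by exists 1, 0; rewrite scale1r addr0; split=> //; apply: span_with0.
by exists 0, a; rewrite scale0r add0r.
Qed.

Section Localization.
Variables (R : comNzRingType) (M : lmodType R) (P : R -> Prop).
Implicit Types (gs hs : seq M) (m x : M).

(* [in_PM m] encodes m \in P M, [in_PM_loc m] encodes m/1 \in P M_P, and
   [loc_span hs m] encodes m/1 \in R_P hs. *)
Definition in_PM m := exists gs, span_with P gs m.
Definition in_PM_loc m := exists2 t, ~ P t & in_PM (t *: m).
Definition loc_span hs m := exists2 t, ~ P t & span hs (t *: m).

Hypothesis HP : is_prime_ideal P.
Let HPi : is_ideal P := prime_ideal_ideal HP.

Lemma in_PM0 : in_PM 0. Proof. by exists [::]. Qed.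

Lemma in_PMD a b : in_PM a -> in_PM b -> in_PM (a + b).
Proof.
case=> gs1 H1 [gs2 H2]; exists (gs1 ++ gs2); apply/span_with_cat.
by exists a, b.
Qed.

Lemma in_PMZ r a : in_PM a -> in_PM (r *: a).
Proof. by case=> gs H; exists gs; apply: span_withZ. Qed.

Lemma in_PMB a b : in_PM a -> in_PM b -> in_PM (a - b).
Proof. by move=> Ha Hb; rewrite -scaleN1r; apply/in_PMD/in_PMZ. Qed.

Lemma in_PM_scale r a : P r -> in_PM (r *: a).
Proof. by move=> Pr; exists [:: a], r, 0; rewrite addr0; split=> //; apply: ideal0. Qed.

Lemma in_PM_loc0 : in_PM_loc 0.
Proof. by exists 1; [apply: prime_ideal_neq1 | rewrite scaler0; apply: in_PM0]. Qed.

Lemma in_PM_locD a b : in_PM_loc a -> in_PM_loc b -> in_PM_loc (a + b).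
Proof.
case=> t Ht Ha [t' Ht' Hb]; exists (t * t'); first exact: prime_idealM_notin.
rewrite scalerDr; apply: in_PMD; [rewrite mulrC -scalerA | rewrite -scalerA]; exact: in_PMZ.
Qed.

Lemma in_PM_locZ r a : in_PM_loc a -> in_PM_loc (r *: a).
Proof. by case=> t Ht Ha; exists t => //; rewrite scalerA mulrC -scalerA; apply: in_PMZ. Qed.

Lemma in_PM_locB a b : in_PM_loc a -> in_PM_loc b -> in_PM_loc (a - b).
Proof. by move=> Ha Hb; rewrite -scaleN1r; apply/in_PM_locD/in_PM_locZ. Qed.

Lemma in_PM_loc_cancel r a : ~ P r -> in_PM_loc (r *: a) -> in_PM_loc a.
Proof. by move=> Hr [t Ht Ha]; exists (t * r); [exact: prime_idealM_notin | rewrite -scalerA]. Qed.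

Lemma loc_span_mem hs v : v \in hs -> loc_span hs v.
Proof. by move=> Hv; exists 1; [apply: prime_ideal_neq1 | rewrite scale1r; apply: span_mem]. Qed.

Lemma span_loc_span gs hs z :
  (forall v, v \in gs -> loc_span hs v) -> span gs z -> loc_span hs z.
Proof.
elim: gs z => [|a l IH] z Hv /=.
  move=> ->; exists 1; first exact: prime_ideal_neq1.
  by rewrite scaler0; exact: (span_with0 idealT).
case=> r [z' [_ Hz' ->]].
have Hl v : v \in l -> loc_span hs v by move=> hv; apply: Hv; rewrite inE hv orbT.
have [u' Hu' Hs'] := IH z' Hl Hz'.
have [s Hs Ha] := Hv a (mem_head _ _).
exists (u' * s); first exact: prime_idealM_notin.
have -> : (u' * s) *: (r *: a + z') = (u' * r) *: (s *: a) + s *: (u' *: z').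
  by rewrite scalerDr !scalerA mulrAC [s * u']mulrC.
by apply: (span_withD idealT); apply: (span_withZ idealT).
Qed.

Lemma loc_span_trans gs hs m :
  (forall v, v \in gs -> loc_span hs v) -> loc_span gs m -> loc_span hs m.
Proof.
move=> Hv [s Hs /(span_loc_span Hv) [u Hu H]].
by exists (u * s); [exact: prime_idealM_notin | rewrite -scalerA].
Qed.

Lemma loc_quot_generatedE hs k : loc_quot_generated P hs k <->
  exists g, size g = k /\ forall m, loc_span (g ++ hs) m.
Proof.
split; case=> g [Hg H]; exists g; split=> // m.
  by have [s [Hs /in_mspan_seq_span Hm]] := H m; exists s.
by have [s Hs /in_mspan_seq_span Hm] := H m; exists s.
Qed.

Lemma in_PM_span_with h m :
  (forall v, loc_span h v) -> in_PM m -> exists2 u, ~ P u & span_with P h (u *: m).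
Proof.
move=> Hgen [gs]; elim: gs m => [|a l IH] m /=.
  move=> ->; exists 1; first exact: prime_ideal_neq1.
  by rewrite scaler0; apply: span_with0.
case=> p [m' [Pp /IH [u' Hu' Hm'] ->]].
have [s Hs Ha] := Hgen a.
exists (u' * s); first exact: prime_idealM_notin.
have -> : (u' * s) *: (p *: a + m') = (u' * p) *: (s *: a) + s *: (u' *: m').
  by rewrite scalerDr !scalerA mulrAC [s * u']mulrC.
apply: span_withD => //; last exact: span_withZ.
exact: span_with_scale (idealMl _ HPi Pp) Ha.
Qed.

Lemma nakayama_loc k :
  (forall m, in_PM_loc m) ->
  loc_quot_generated P (@nil M) k.+1 -> loc_quot_generated P (@nil M) k.
Proof.
move=> Hall /loc_quot_generatedE [[|a l] [//= [Hl] Hgen]].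
rewrite cats0 in Hgen; have [t Ht /(in_PM_span_with Hgen) [u Hu]] := Hall a.
case=> p [m' [Pp Hm' Eu]].
have Ha : loc_span l a.
  exists (u * t - p); first exact: prime_idealB_notin (prime_idealM_notin HP Hu Ht) Pp.
  by rewrite scalerBl -scalerA Eu addrC addKr; exact: span_with_sub (fun _ _ => I) Hm'.
apply/loc_quot_generatedE; exists l; split=> // m; rewrite cats0.
apply: loc_span_trans (Hgen m) => v; rewrite inE => /orP [/eqP ->|Hv] //.
exact: loc_span_mem.
Qed.

Lemma notin_PM_pivot h w : span h w -> ~ in_PM w ->
  exists h1 a h2 r v, [/\ h = h1 ++ a :: h2, ~ P r, span (h1 ++ h2) v & w = r *: a + v].
Proof.
elim: h w => [|b l IH] w /=; first by move=> -> []; apply: in_PM0.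
case=> r [w' [_ Hw' ->]] Hnot.
have [Pr|Nr] := classic (P r); last by exists [::], b, l, r, w'.
have Nw' : ~ in_PM w' by move=> H; apply: Hnot; apply: in_PMD (in_PM_scale _ Pr) H.
have [h1 [a [h2 [r' [v [-> Hr' Hv ->]]]]]] := IH _ Hw' Nw'.
exists (b :: h1), a, h2, r', (r *: b + v); split=> //; first by exists r, v.
by rewrite addrCA.
Qed.

Lemma mu_loc_quot_cons k x :
  mu_loc_quot P (@nil M) k.+1 -> ~ in_PM_loc x -> mu_loc_quot P [:: x] k.
Proof.
case=> /loc_quot_generatedE [h [Hh Hgen]] Hmin Hx; rewrite cats0 in Hgen.
split; last first.
  move=> k' /loc_quot_generatedE [g' [Hg' Hgen']]; rewrite -ltnS; apply: Hmin.
  apply/loc_quot_generatedE; exists (g' ++ [:: x]).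
  by rewrite size_cat Hg' addn1 cats0.
have [s Hs Hsx] := Hgen x.
have Nsx : ~ in_PM (s *: x) by move=> H; apply: Hx; exists s.
have [h1 [a [h2 [r [v [Eh Hr Hv Esx]]]]]] := notin_PM_pivot Hsx Nsx.
apply/loc_quot_generatedE; exists (h1 ++ h2); split.
  by move: Hh; rewrite Eh !size_cat addnS => -[].
move=> m; apply: loc_span_trans (Hgen m) => b.
rewrite Eh mem_cat inE => /or3P [Hb|/eqP ->|Hb]; last 2 first.
- exists r => //; have -> : r *: a = s *: x - v by rewrite Esx addrK.
  apply: (span_withB idealT); last exact: (span_with_catl idealT).
  apply/(span_with_catr idealT)/(span_withZ idealT).
  by apply: span_mem; rewrite mem_head.
- by apply: loc_span_mem; rewrite !mem_cat Hb orbT.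
by apply: loc_span_mem; rewrite !mem_cat Hb.
Qed.

Lemma mu_loc_quot0_cons x : mu_loc_quot P (@nil M) 0 -> mu_loc_quot P [:: x] 0.
Proof.
case=> /loc_quot_generatedE [[|a l] [//= _ Hgen]] _; split=> //.
apply/loc_quot_generatedE; exists [::]; split=> // m.
have [t Ht Htm] := Hgen m; exists t => //.
by move: Htm => /= ->; exists 0, 0; rewrite scale0r addr0.
Qed.

Lemma mu_loc_quot_notin_PM_loc k : mu_loc_quot P (@nil M) k.+1 -> exists m, ~ in_PM_loc m.
Proof.
case=> Hgen Hmin; apply: NNPP => Hnone.
have /Hmin : loc_quot_generated P (@nil M) k.
  by apply: nakayama_loc Hgen => m; apply: NNPP => Hm; apply: Hnone; exists m.
by rewrite ltnn.
Qed.

End Localization.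

Section GeneratingFamily.
Variables (R : comNzRingType) (M : lmodType R) (k : nat) (g : 'I_k -> M).

Lemma in_PM_coef P m : is_ideal P -> (forall m, in_mspan g m) ->
  in_PM P m -> exists a, (forall j, P (a j)) /\ m = \sum_j a j *: g j.
Proof.
move=> HP Hgen [gs]; elim: gs m => [|v l IH] m /=.
  move=> ->; exists (fun _ => 0); split=> [j|]; first exact: ideal0.
  by rewrite big1 // => j _; rewrite scale0r.
case=> p [m' [Pp /IH [a [Ha ->]] ->]].
have [c ->] := Hgen v.
exists (fun j => p * c j + a j); split=> [j|]; first by apply: idealD => //; apply: idealMr.
by rewrite scaler_sumr -big_split; apply: eq_bigr => j _; rewrite scalerDl scalerA.
Qed.

Lemma minimal_generators_irredundant i (b : 'I_k -> R) u :
  minimal_generators g -> g i = \sum_j b j *: g j -> (1 - b i) * u = 1 -> False.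
Proof.
move=> [Hgen /(_ i) [m Hm]] Egb Hu; apply: Hm.
have Egi : g i = \sum_(j | j != i) (u * b j) *: g j.
  have Es : (1 - b i) *: g i = \sum_(j | j != i) b j *: g j.
    by rewrite scalerBl scale1r {1}Egb (bigD1 i) //= addrAC subrr add0r.
  rewrite -[g i]scale1r -Hu mulrC -scalerA Es scaler_sumr.
  by apply: eq_bigr => j _; rewrite scalerA.
have [e ->] := Hgen m.
exists (fun j => if j == i then 0 else e j + e i * (u * b j)); split; first by rewrite eqxx.
rewrite (bigD1 i) //= [in RHS](bigD1 i) //= eqxx scale0r add0r {1}Egi scaler_sumr.
rewrite -big_split /=; apply: eq_bigr => j /negbTE ->.
by rewrite scalerDl scalerA addrC.
Qed.

End GeneratingFamily.

Section GradedRing.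
Variables (R : comNzRingType) (Rg : nat -> R -> Prop).
Hypothesis HR : graded_ring Rg.

Lemma grade0 n : Rg n 0. Proof. by case: HR => -[]. Qed.

Lemma gradeB n a b : Rg n a -> Rg n b -> Rg n (a - b).
Proof. by case: HR => -[_ H] _ _ _ _; apply: H. Qed.

Lemma grade1 : Rg 0 1. Proof. by case: HR. Qed.

Lemma gradeM i j a b : Rg i a -> Rg j b -> Rg (i + j) (a * b).
Proof. by case: HR => _ _ H _ _; apply: H. Qed.

Lemma gradeD n a b : Rg n a -> Rg n b -> Rg n (a + b).
Proof.
move=> Ha Hb; have -> : a + b = a - (0 - b) by rewrite sub0r opprK.
by apply: gradeB => //; apply: gradeB => //; apply: grade0.
Qed.

Lemma gradeX i r e : Rg i r -> Rg (i * e) (r ^+ e).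
Proof.
move=> Hr; elim: e => [|e IH]; first by rewrite muln0 expr0; apply: grade1.
by rewrite mulnS exprS; apply: gradeM.
Qed.

Lemma homogeneous_family_decomp P k (a : 'I_k -> R) :
  is_ideal P -> homogeneous_ideal Rg P -> (forall j, P (a j)) ->
  exists N (c : 'I_k -> nat -> R),
    (forall j n, Rg n (c j n) /\ P (c j n)) /\ forall j, a j = \sum_(n < N) c j n.
Proof.
move=> HP HPh Ha.
have /fin_all_exists [Ns /fin_all_exists [c Hc]] : forall j, exists N (c : nat -> R),
    (forall n, Rg n (c n)) /\ a j = \sum_(n < N) c n.
  by move=> j; case: HR => _ _ _ Hdec _; apply: Hdec.
exists (\max_j Ns j), (fun j n => if (n < Ns j)%N then c j n else 0).
split=> [j n|j] /=.
  case: ifP => Hn; last by split; [apply: grade0 | apply: ideal0].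
  have [Hcj Ea] := Hc j; split=> //; apply: HPh Hcj _ n Hn.
  by rewrite -Ea; apply: Ha.
have [_ ->] := Hc j.
by rewrite (big_ord_widen _ (c j) (leq_bigmax j)) big_mkcond.
Qed.

Hypothesis HS : standard_graded Rg.

Lemma degree0_congr P : is_ideal P -> (forall a, Rg 1 a -> P a) ->
  forall t, exists2 t0, Rg 0 t0 & P (t - t0).
Proof.
move=> HP HR1; case: HS => k [y [Hy Hind]]; apply: Hind.
- by move=> a Ha; exists a; rewrite ?subrr //; apply: ideal0.
- by move=> i; exists 0; [apply: grade0 | rewrite subr0; apply: HR1].
- move=> a b [a0 Ha0 Ha] [b0 Hb0 Hb]; exists (a0 + b0); first exact: gradeD.
  by rewrite opprD addrACA; apply: idealD.
- move=> a b [a0 Ha0 Ha] [b0 Hb0 Hb]; exists (a0 * b0); first exact: (gradeM Ha0 Hb0).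
  have -> : a * b - a0 * b0 = (a - a0) * b + a0 * (b - b0).
    by rewrite mulrBl mulrBr addrA subrK.
  by apply: idealD => //; [apply: idealMr | apply: idealMl].
Qed.

Variable m0 : R -> Prop.
Hypothesis Hloc : local0 Rg m0.

Lemma m0_grade0 a : m0 a -> Rg 0 a. Proof. by case: Hloc => -[H _ _ _] _; apply: H. Qed.

Lemma m0D a b : m0 a -> m0 b -> m0 (a + b). Proof. by case: Hloc => -[_ _ H _] _; apply: H. Qed.

Lemma m0M r a : Rg 0 r -> m0 a -> m0 (r * a). Proof. by case: Hloc => -[_ _ _ H] _; apply: H. Qed.

Lemma local0_unit a : Rg 0 a -> ~ m0 a -> exists2 b, Rg 0 b & a * b = 1.
Proof. by case: Hloc => _ H Ha /(H a Ha) [b []]; exists b. Qed.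

Lemma m0_neq1 : ~ m0 1.
Proof. by case: Hloc => _ /(_ 1 grade1) H; apply/H; exists 1; rewrite mulr1; split=> //; apply: grade1. Qed.

Lemma m0_1B_notin a : m0 a -> ~ m0 (1 - a).
Proof. by move=> Ha H; apply: m0_neq1; rewrite -(subrK a 1); apply: m0D. Qed.

Hypothesis Hart : artinian0 Rg.

(* The chain of ideals R_0 a^n stabilises, so a^N = c a^(N+1) and 1 - c a is a unit. *)
Lemma m0_nilpotent a : m0 a -> exists N, a ^+ N = 0.
Proof.
move=> Ha; have Ra := m0_grade0 Ha.
pose I n b := exists2 c, Rg 0 c & b = c * a ^+ n.
have HI n : is_ideal0 Rg (I n).
  split.
  - by move=> b [c Hc ->]; apply: (gradeM Hc); rewrite -(mul0n n); apply: gradeX.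
  - by exists 0; [apply: grade0 | rewrite mul0r].
  - by move=> b b' [c Hc ->] [c' Hc' ->]; exists (c + c'); [apply: gradeD | rewrite mulrDl].
  - by move=> r b Hr [c Hc ->]; exists (r * c); [apply: (gradeM Hr) | rewrite mulrA].
have Hdec n b : I n.+1 b -> I n b.
  by case=> c Hc ->; exists (c * a); [apply: (gradeM Hc) | rewrite exprS mulrA].
have [N HN] := Hart HI Hdec.
have [c Hc EaN] : I N.+1 (a ^+ N).
  by apply/(HN N.+1 (leqnSn N)); exists 1; [apply: grade1 | rewrite mul1r].
have Hca : m0 (c * a) := m0M Hc Ha.
have [u _ Hu] := local0_unit (gradeB grade1 (m0_grade0 Hca)) (m0_1B_notin Hca).
exists N; rewrite -[a ^+ N]mulr1 -Hu mulrA mulrBr mulr1 mulrCA -exprSr -EaN.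
by rewrite subrr mul0r.
Qed.

Lemma m0_sub_prime P a : is_prime_ideal P -> m0 a -> P a.
Proof.
move=> HP /m0_nilpotent [N EaN]; apply: (prime_ideal_root (e := N) HP).
by rewrite EaN; exact: ideal0 (prime_ideal_ideal HP).
Qed.

End GradedRing.

Section GradedModule.
Variables (R : comNzRingType) (Rg : nat -> R -> Prop) (M : lmodType R) (Mg : int -> M -> Prop).
Hypothesis HM : graded_module Rg Mg.

Lemma mgrade0 k : Mg k 0. Proof. by case: HM. Qed.

Lemma mgradeB k a b : Mg k a -> Mg k b -> Mg k (a - b).
Proof. by case: HM => _ H _ _ _; apply: H. Qed.

Lemma mgradeZ i j r m : Rg i r -> Mg j m -> Mg (i%:Z + j) (r *: m).
Proof. by case: HM => _ _ H _ _; apply: H. Qed.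

Lemma mgradeD k a b : Mg k a -> Mg k b -> Mg k (a + b).
Proof.
move=> Ha Hb; have -> : a + b = a - (0 - b) by rewrite sub0r opprK.
by apply: mgradeB => //; apply: mgradeB => //; apply: mgrade0.
Qed.

Lemma mgradeZ0 j r m : Rg 0 r -> Mg j m -> Mg j (r *: m).
Proof. by move=> Hr /(mgradeZ Hr); rewrite add0r. Qed.

Lemma mgrade_sum k (I : Type) (s : seq I) (Q : pred I) (F : I -> M) :
  (forall i, Q i -> Mg k (F i)) -> Mg k (\sum_(i <- s | Q i) F i).
Proof. by move=> H; apply: big_ind => //; [apply: mgrade0 | apply: mgradeD]. Qed.

Lemma mgrade_component (T : finType) (deg : T -> int) (w : T -> M) D v :
  (forall t, Mg (deg t) (w t)) -> Mg D v -> v = \sum_t w t ->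
  v = \sum_(t | deg t == D) w t.
Proof.
move=> Hw Hv Ev; have [_ _ _ _ Hdirect] := HM.
pose ks := undup (D :: map deg (enum T)).
pose e k := \sum_(t | deg t == k) w t - (if k == D then v else 0).
have He k : Mg k (e k).
  apply: mgradeB; first by apply: mgrade_sum => t /eqP <-.
  by case: eqP => [->|_] //; apply: mgrade0.
have Hsel x (F : int -> M) : x \in ks -> \sum_(k <- ks | x == k) F k = F x.
  move=> Hx; rewrite -big_filter.
  have -> : [seq k <- ks | x == k] = [:: x].
    by rewrite -(filter_pred1_uniq (undup_uniq _) Hx); apply: eq_filter => k /=; rewrite eq_sym.
  by rewrite big_seq1.
have Hdeg t : deg t \in ks by rewrite mem_undup inE map_f ?orbT // mem_enum.
have HD : D \in ks by rewrite mem_undup mem_head.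
have H0 : \sum_(k <- ks) e k = 0.
  rewrite sumrB.
  have -> : \sum_(k <- ks) \sum_(t | deg t == k) w t = \sum_t w t.
    under eq_bigr do rewrite big_mkcond.
    rewrite exchange_big /=; apply: eq_bigr => t _.
    by rewrite -big_mkcond /= Hsel.
  have -> : \sum_(k <- ks) (if k == D then v else 0) = v.
    by rewrite -big_mkcond /=; under eq_bigl do rewrite eq_sym; rewrite Hsel.
  by rewrite -Ev subrr.
have := Hdirect ks e (undup_uniq _) He H0 D HD.
by rewrite /e eqxx => /eqP; rewrite subr_eq0 => /eqP.
Qed.

Lemma homog_coef_project k (g : 'I_k -> M) (d : 'I_k -> int) i N (c : 'I_k -> nat -> R) :
  (forall j, Mg (d j) (g j)) -> (forall j n, Rg n (c j n)) ->
  g i = \sum_j \sum_(n < N) c j n *: g j ->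
  g i = \sum_j (\sum_(n < N | n%:Z + d j == d i) c j n) *: g j.
Proof.
move=> Hg Hc Egc.
pose deg (p : 'I_k * 'I_N) := (p.2 : nat)%:Z + d p.1.
have Hw p : Mg (deg p) (c p.1 p.2 *: g p.1) by apply: mgradeZ.
rewrite {1}(mgrade_component Hw (Hg i) (etrans Egc (pair_big _ _ _))).
rewrite (eq_bigl (fun p : 'I_k * 'I_N => xpredT p.1 && (deg p == d i))) //.
rewrite -(pair_big_dep xpredT (fun j (n : 'I_N) => n%:Z + d j == d i)
  (fun j (n : 'I_N) => c j n *: g j)).
by apply: eq_bigr => j _; rewrite scaler_suml.
Qed.

End GradedModule.

Section TopDegree.
Variables (R : comNzRingType) (Rg : nat -> R -> Prop) (m0 : R -> Prop).
Variables (M : lmodType R) (Mg : int -> M -> Prop).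
Variables (s : nat) (g : 'I_s.+1 -> M) (d : 'I_s.+1 -> int) (P : R -> Prop).
Hypotheses (HR : graded_ring Rg) (HS : standard_graded Rg).
Hypotheses (Hloc : local0 Rg m0) (Hart : artinian0 Rg) (HM : graded_module Rg Mg).
Hypotheses (Hg : forall i, Mg (d i) (g i)) (Hmin : minimal_generators g).
Hypotheses (Hord : forall i j : 'I_s.+1, (i <= j)%N -> d j <= d i).
Hypotheses (HP : is_prime_ideal P) (HPh : homogeneous_ideal Rg P).

(* Multiplying by powers of r lifts every generator into the top degree d_1. *)
Lemma in_PM_loc_of_top_degree r : Rg 1 r -> ~ P r ->
  (forall y, Mg (d ord0) y -> in_PM_loc P y) -> forall m : M, in_PM_loc P m.
Proof.
move=> Hr Nr Htop m.
have Hgj j : in_PM_loc P (g j).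
  pose e := `|d ord0 - d j|%N.
  have Ee : e%:Z + d j = d ord0 by rewrite gez0_abs ?subrK // subr_ge0 Hord.
  apply: (in_PM_loc_cancel HP (r := r ^+ e)); first by move/(prime_ideal_root HP).
  apply: Htop; rewrite -Ee; apply: (mgradeZ HM) (Hg j).
  by have := gradeX HR e Hr; rewrite mul1n.
have [c ->] := Hmin.1 m.
apply: big_ind => [|a b|j _]; [exact: in_PM_loc0 | exact: in_PM_locD | exact: in_PM_locZ].
Qed.

(* If R_1 is in P then R = R_0 + P, and elements of R_0 outside P are units since m0 is in P. *)
Lemma in_PM_loc_in_PM (m : M) : (forall a, Rg 1 a -> P a) -> in_PM_loc P m -> in_PM P m.
Proof.
move=> HR1 [t Ht Htm].
have HPi := prime_ideal_ideal HP.
have [t0 Ht0 Htt0] := degree0_congr HR HS HPi HR1 t.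
have Nt0 : ~ P t0 by move=> H; apply: Ht; rewrite -(subrK t0 t); apply: idealD.
have [b _ Htb] := local0_unit Hloc Ht0 (fun H => Nt0 (m0_sub_prime HR Hloc Hart HP H)).
have -> : m = b *: (t *: m - (t - t0) *: m).
  by rewrite -scalerBl opprB addrC subrK scalerA mulrC Htb scale1r.
by apply/(in_PMZ HP)/(in_PMB HP) => //; apply: in_PM_scale.
Qed.

(* Comparing degree-d_1 components of g_1 = sum_j a_j g_j with a_j in P gives
   g_1 = sum_j b_j g_j with b_1 in P \cap R_0, which is inside m0. *)
Lemma top_generator_notin_PM_loc : (forall a, Rg 1 a -> P a) -> ~ in_PM_loc P (g ord0).
Proof.
move=> HR1 /(in_PM_loc_in_PM HR1) /(in_PM_coef (prime_ideal_ideal HP) Hmin.1) [a [Ha Ega]].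
have HPi := prime_ideal_ideal HP.
have [N [c [Hc Ea]]] := homogeneous_family_decomp HR HPi HPh Ha.
have /(homog_coef_project HM Hg (fun j n => (Hc j n).1)) Egb :
    g ord0 = \sum_j \sum_(n < N) c j n *: g j.
  by rewrite {1}Ega; apply: eq_bigr => j _; rewrite Ea scaler_suml.
set b := fun j => \sum_(n < N | n%:Z + d j == d ord0) c j n in Egb.
have Pb : P (b ord0) by apply: big_ind => [|x y|n _]; [exact: ideal0 | exact: idealD | case: (Hc ord0 n)].
have Rb : Rg 0 (b ord0).
  apply: big_ind => [|x y|n /eqP]; [exact: grade0 | exact: gradeD |].
  by rewrite -{2}[d ord0]add0r => /addIr [->]; case: (Hc ord0 0%N).
have m0b : m0 (b ord0).
  apply: NNPP => Nb; have [u _ Hu] := local0_unit Hloc Rb Nb.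
  by apply: (prime_ideal_neq1 HP); rewrite -Hu; apply: idealMr.
have [u _ Hu] := local0_unit Hloc (gradeB HR (grade1 HR) Rb) (m0_1B_notin HR Hloc m0b).
exact: minimal_generators_irredundant Hmin Egb Hu.
Qed.

Lemma exists_top_degree_notin_PM_loc k :
  mu_loc_quot P (@nil M) k.+1 -> exists2 y, Mg (d ord0) y & ~ in_PM_loc P y.
Proof.
move=> /(mu_loc_quot_notin_PM_loc HP) [m Hm].
have [[r [Hr Nr]]|HR1] := classic (exists r, Rg 1 r /\ ~ P r).
  apply: NNPP => Hno; apply/Hm/(in_PM_loc_of_top_degree Hr Nr) => y Hy.
  by apply: NNPP => Ny; apply: Hno; exists y.
exists (g ord0) => //; apply: top_generator_notin_PM_loc => a Ha.
by apply: NNPP => Na; apply: HR1; exists a.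
Qed.

End TopDegree.

Lemma pigeonhole_avoid (T : eqType) (Q : T -> nat -> Prop) (l : seq T) (L : seq nat) :
  (forall j, j \in l -> forall a b, Q j a -> Q j b -> a = b) ->
  uniq L -> (size l < size L)%N -> exists2 x, x \in L & forall j, j \in l -> ~ Q j x.
Proof.
elim: l L => [|j l IH] L Huniq UL HL.
  by case: L HL UL => // x L _ _; exists x; rewrite ?mem_head.
have Hl j' : j' \in l -> forall a b, Q j' a -> Q j' b -> a = b.
  by move=> Hj'; apply: Huniq; rewrite inE Hj' orbT.
have [[x0 Hx0 Qx0]|Hno] := classic (exists2 x0, x0 \in L & Q j x0).
  have Hsize : (size l < size (rem x0 L))%N.
    by rewrite size_rem //; move: HL; case: (size L) => // n; rewrite ltnS.
  have [x] := IH (rem x0 L) Hl (rem_uniq _ UL) Hsize.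
  rewrite (mem_rem_uniq _ UL) inE => /andP [Hne HxL] Hx.
  exists x => // j'; rewrite inE => /orP [/eqP -> Qx|]; last exact: Hx.
  by move: Hne; rewrite (Huniq j (mem_head _ _) _ _ Qx Qx0) eqxx.
have [x HxL Hx] := IH L Hl UL (ltnW HL).
exists x => // j'; rewrite inE => /orP [/eqP -> Qx|]; last exact: Hx.
by apply: Hno; exists x.
Qed.

Section Avoidance.
Variables (R : comNzRingType) (Rg : nat -> R -> Prop) (m0 : R -> Prop) (M : lmodType R).
Hypotheses (HR : graded_ring Rg) (Hloc : local0 Rg m0).
Variable W : M -> Prop.
Hypotheses (W0 : W 0) (WD : forall a b, W a -> W b -> W (a + b)).
Hypothesis WZ : forall r a, Rg 0 r -> W a -> W (r *: a).
Variables (I : eqType) (N : I -> M -> Prop).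
Hypotheses (NB : forall i a b, N i a -> N i b -> N i (a - b)) (NZ : forall i r a, N i a -> N i (r *: a)).
Variable f : nat -> R.
Hypotheses (Hf : forall k, Rg 0 (f k)) (Hfd : forall i j, m0 (f i - f j) -> i = j).

Lemma submodule_avoidance (l : seq I) : exists2 w, W w &
  forall i, i \in l -> (exists2 w', W w' & ~ N i w') -> ~ N i w.
Proof.
elim: l => [|i l [y Wy Hy]]; first by exists 0.
have [[yi Wyi Nyi]|Hno] := classic (exists2 w', W w' & ~ N i w'); last first.
  by exists y => // i0; rewrite inE => /orP [/eqP -> /Hno []|/Hy].
have [Niy|Niy] := classic (N i y); last first.
  by exists y => // i0; rewrite inE => /orP [/eqP -> _ //|/Hy].
pose z k := yi + f k *: y.
(* Since y avoids N j, two z k in N j would put the unit multiple (f a - f b) y in N j. *)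
pose Q j k := (exists2 w', W w' & ~ N j w') /\ N j (z k).
have HQ j : j \in l -> forall a b, Q j a -> Q j b -> a = b.
  move=> Hj a b [Hw Ha] [_ Hb]; apply: NNPP => Hab.
  have [u _ Hu] := local0_unit Hloc (gradeB HR (Hf a) (Hf b)) (fun H => Hab (Hfd H)).
  apply: (Hy _ Hj Hw); have := NZ u (NB Ha Hb).
  by rewrite /z opprD addrACA subrr add0r -scalerBl scalerA mulrC Hu scale1r.
have Hsize : (size l < size (iota 0 (size l).+1))%N by rewrite size_iota.
have [k _ Hk] := pigeonhole_avoid HQ (iota_uniq 0 (size l).+1) Hsize.
exists (z k); first by apply: WD => //; apply: WZ.
move=> i0; rewrite inE => /orP [/eqP -> _ Hz|Hi0 Hw Hz].
  by apply: Nyi; have := NB Hz (NZ (f k) Niy); rewrite /z addrK.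
exact: Hk Hi0 (conj Hw Hz).
Qed.

End Avoidance.

Unset Implicit Arguments.

Theorem lemma4p2 (R : comNzRingType) (Rg : nat -> R -> Prop) (m0 : R -> Prop)
  (M : lmodType R) (Mg : int -> M -> Prop)
  (s : nat) (g : 'I_s.+1 -> M) (d : 'I_s.+1 -> int)
  (n : nat) (P : 'I_n -> R -> Prop) :
  graded_ring Rg -> standard_graded Rg -> noetherian R ->
  local0 Rg m0 -> artinian0 Rg -> infinite_residue Rg m0 ->
  graded_module Rg Mg ->
  (forall i, Mg (d i) (g i)) ->
  (forall i j : 'I_s.+1, (i <= j)%N -> d j <= d i) ->
  minimal_generators g ->
  (forall i, is_prime_ideal (P i) /\ homogeneous_ideal Rg (P i)) ->
  exists x : M, Mg (d ord0) x /\
    forall i : 'I_n,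
      forall k, mu_loc_quot (P i) (@nil M) k -> mu_loc_quot (P i) [:: x] k.-1.
Proof.
move=> HR HS _ Hloc Hart [f [Hf Hfd]] HM Hg Hord Hmin HPi.
have [x Hx Havoid] := submodule_avoidance HR Hloc (mgrade0 HM (d ord0))
  (@mgradeD _ _ _ _ HM _) (@mgradeZ0 _ _ _ _ HM _)
  (fun i => in_PM_locB (HPi i).1) (fun i => in_PM_locZ (HPi i).1) Hf Hfd (enum 'I_n).
exists x; split=> // i [|k] Hmu; first exact: mu_loc_quot0_cons.
apply: (mu_loc_quot_cons (HPi i).1 Hmu); apply: Havoid; first by rewrite mem_enum.
have [y Hy Ny] := exists_top_degree_notin_PM_loc HR HS Hloc Hart HM Hg Hmin Hord
  (HPi i).1 (HPi i).2 Hmu.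
by exists y.
Qed.
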